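(* (Redeemability) In the TeeRollup protocol with the challenge mechanism described in the context, if a client submits a transaction $tx$ to the sequencers, then either $tx$ is eventually executed, or the TeeRollup smart contract (TSC) is settled, in which case the deposit of every client can be redeemed on the main chain.
   Context: TeeRollup is a rollup protocol on a main chain with finality, timestamps and smart contracts. There are $n$ sequencers, each with a TEE enclave holding a registered key pair; at most $f$ TEEs are compromised and the rest are uncompromised; any sequencer may be malicious and may crash its enclave or drop messages to/from it. Uncompromised enclaves run the fixed protocol program. Rollup states are recorded on the TSC as digests $st_h=\langle h, H(st_{h-1}), R_h, H(txs_h)\rangle$, where $R_h$ is the Merkle root of the account tree (account address, i.e. public key, and balance); data availability providers store the full account tree and can supply Merkle proofs of balances. A quorum certificate (QC) is a set of valid signatures from at least $f+1$ distinct registered sequencers' enclaves. Challenge mechanism on the TSC: while the TSC is Active, a client may call StartChallenge, posting $tx$ on-chain together with collateral; this records the start time. An enclave that receives the challenge includes $tx$ in its next batch, executes it and signs it. A challenge is resolved (ResolveChallenge) only by submitting a valid QC for the execution of $tx$ before a waiting time $\tau$ elapses. If the challenge is not resolved within $\tau$, anyone may call SettleRollup, which sets the TSC to Frozen (no further state updates or deposits). While Frozen, any client can call SettleWithdraw with its account address, a signature under that account's secret key, a balance $b$ and a Merkle proof that the account has balance $b$ under the account root of the latest recorded state; upon verification the TSC refunds $b$ on the main chain to the client. *)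

From mathcomp Require Import all_boot.
From Stdlib Require List.
Set Implicit Arguments. Unset Strict Implicit. Unset Printing Implicit Defensive.

(* Basic data: addresses (= public keys), hashes, signatures, secret keys,
   transactions are all encoded as natural numbers. *)
Definition addr := nat.
Definition hash := nat.
Definition sig := nat.
Definition skey := nat.
Definition tx := nat.

(* st_h = < h, H(st_{h-1}), R_h, H(txs_h) > *)
Record digest := Digest {
  d_height : nat; d_prev : hash; d_root : hash; d_txh : hash }.

Inductive msg :=
  | MState of digest          (* a state digest, signed by an enclave *)
  | MExec of tx               (* execution of a (challenged) transaction *)
  | MWithdraw of addr & nat.

Record crypto := Crypto {
  pk_of : skey -> addr;                  (* public key = account address *)
  sign : skey -> msg -> sig;
  verify : addr -> msg -> sig -> bool;
  Hd : digest -> hash;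
  Htxs : seq tx -> hash;
  Hleaf : addr -> nat -> hash;           (* Merkle leaf hash of (address, balance) *)
  Hnode : hash -> hash -> hash }.

Definition sig_correct (C : crypto) : Prop :=
  forall sk m, verify C (pk_of C sk) m (sign C sk m).

Inductive mtree := MLeaf of addr & nat | MNode of mtree & mtree.

Fixpoint mroot (C : crypto) (t : mtree) : hash :=
  match t with
  | MLeaf a b => Hleaf C a b
  | MNode l r => Hnode C (mroot C l) (mroot C r)
  end.

Fixpoint leaves (t : mtree) : seq (addr * nat) :=
  match t with
  | MLeaf a b => [:: (a, b)]
  | MNode l r => leaves l ++ leaves r
  end.

(* A Merkle proof: the list of siblings from the leaf up to the root;
   (true, h) means the sibling h is on the right, (false, h) on the left. *)
Definition mproof := seq (bool * hash).

Definition mverify (C : crypto) (root : hash) (a : addr) (b : nat) (p : mproof) : bool :=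
  foldl (fun acc (s : bool * hash) => if s.1 then Hnode C acc s.2 else Hnode C s.2 acc)
        (Hleaf C a b) p == root.

(* Protocol parameters: n sequencers with registered enclave keys, the
   fault bound f (QC size f+1) and the challenge waiting time tau. *)
Record params := Params { n : nat; f : nat; reg : seq addr; tau : nat }.

(* A quorum certificate: (sequencer index, signature) pairs. *)
Definition qc := seq (nat * sig).

Definition valid_qc (C : crypto) (P : params) (m : msg) (q : qc) : bool :=
  [&& uniq (map fst q), f P < size q &
      all (fun e : nat * sig => (e.1 < n P) && verify C (nth 0 (reg P) e.1) m e.2) q].

Record tsc := TSC {
  st_frozen : bool;                        (* false = Active, true = Frozen *)
  st_latest : digest;
  st_past : seq digest;
  st_challenges : seq (tx * nat * bool);   (* (tx, start time, resolved?) *)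
  st_executed : seq tx;
  st_refunds : seq (addr * nat) }.

(* Calls to the TSC (collateral of challenges is not modelled). *)
Inductive call :=
  | UpdateState of digest & seq tx & qc
  | StartChallenge of tx
  | ResolveChallenge of tx & qc
  | SettleRollup
  | SettleWithdraw of addr & sig & nat & mproof.

Definition step (C : crypto) (P : params) (now : nat) (S : tsc) (c : call) : tsc :=
  match c with
  | UpdateState d txs q =>
      if [&& ~~ st_frozen S, valid_qc C P (MState d) q,
             d_height d == (d_height (st_latest S)).+1,
             d_prev d == Hd C (st_latest S) & d_txh d == Htxs C txs]
      then TSC (st_frozen S) d (st_latest S :: st_past S) (st_challenges S)
               (txs ++ st_executed S) (st_refunds S)
      else S
  | StartChallenge x =>
      if ~~ st_frozen S
      then TSC (st_frozen S) (st_latest S) (st_past S) ((x, now, false) :: st_challenges S)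
               (st_executed S) (st_refunds S)
      else S
  | ResolveChallenge x q =>
      if [&& ~~ st_frozen S,
             has (fun c : tx * nat * bool => [&& c.1.1 == x, ~~ c.2 & now < c.1.2 + tau P])
                 (st_challenges S)
           & valid_qc C P (MExec x) q]
      then TSC (st_frozen S) (st_latest S) (st_past S)
               (map (fun c : tx * nat * bool =>
                       if (c.1.1 == x) && (now < c.1.2 + tau P) then (c.1, true) else c)
                    (st_challenges S))
               (x :: st_executed S) (st_refunds S)
      else S
  | SettleRollup =>
      if ~~ st_frozen S &&
         has (fun c : tx * nat * bool => ~~ c.2 && (c.1.2 + tau P <= now)) (st_challenges S)
      then TSC true (st_latest S) (st_past S) (st_challenges S) (st_executed S) (st_refunds S)
      else S
  | SettleWithdraw a s b p =>
      if [&& st_frozen S, verify C a (MWithdraw a b) s & mverify C (d_root (st_latest S)) a b p]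
      then TSC (st_frozen S) (st_latest S) (st_past S) (st_challenges S) (st_executed S)
               ((a, b) :: st_refunds S)
      else S
  end.

Definition init_tsc (g : digest) : tsc := TSC false g [::] [::] [::] [::].

(* The main chain: block t (timestamp t) contains the list of TSC calls,
   processed in order.  state_at t = TSC state before block t. *)
Fixpoint state_at (C : crypto) (P : params) (g : digest) (blocks : nat -> seq call)
    (t : nat) : tsc :=
  match t with
  | 0 => init_tsc g
  | t'.+1 => foldl (step C P t') (state_at C P g blocks t') (blocks t')
  end.

(* Every account holder of the latest recorded state can redeem its balance:
   with the Merkle proof (supplied by the DA providers from the stored tree
   da (st_latest S)) and its own signature, SettleWithdraw refunds b. *)
Definition redeemable (C : crypto) (P : params) (da : digest -> mtree) (S : tsc) : Prop :=
  forall (sk : skey) (b : nat), (pk_of C sk, b) \in leaves (da (st_latest S)) ->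
    exists p : mproof, forall now : nat,
      st_refunds (step C P now S
        (SettleWithdraw (pk_of C sk) (sign C sk (MWithdraw (pk_of C sk) b)) b p))
      = (pk_of C sk, b) :: st_refunds S.

Definition in_block (c : call) (b : seq call) : Prop := List.In c b.

(* Once x is challenged at time tc, the pending entry (x, tc, unresolved) can
   only disappear by a ResolveChallenge, which records x as executed, or be
   made irrelevant by freezing.  So at time tc + tau either x is executed or
   the unresolved entry is old enough for SettleRollup to freeze the TSC.
   Freezing is permanent, and then every account (a, b) of the latest state
   is a leaf of the stored tree, whose root is the recorded one: the path of
   siblings is a valid Merkle proof and SettleWithdraw pays out b. *)
From mathcomp Require Import all_boot.

Set Implicit Arguments.
Unset Strict Implicit.

Lemma mverify_leaf (C : crypto) (t : mtree) (a : addr) (b : nat) :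
  (a, b) \in leaves t -> exists p : mproof, mverify C (mroot C t) a b p.
Proof.
rewrite /mverify; elim: t => [a' b'|l IHl r IHr] /=.
  by rewrite inE => /eqP [-> ->]; exists [::].
rewrite mem_cat => /orP [/IHl [p /eqP Hp]|/IHr [p /eqP Hp]].
  by exists (rcons p (true, mroot C r)); rewrite -cats1 foldl_cat Hp.
by exists (rcons p (false, mroot C l)); rewrite -cats1 foldl_cat Hp.
Qed.

Section TSC.
Variables (C : crypto) (P : params).

Lemma foldl_step_inv (Q : tsc -> Prop) now (bl : seq call) (S : tsc) :
  (forall S c, Q S -> Q (step C P now S c)) ->
  Q S -> Q (foldl (step C P now) S bl).
Proof. by move=> HQ; elim: bl S => [|c bl IH] S QS //=; apply/IH/HQ. Qed.

Lemma foldl_step_in (I Q : tsc -> Prop) now (c : call) (bl : seq call) (S : tsc) :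
  (forall S c', I S -> I (step C P now S c')) ->
  (forall S c', Q S -> Q (step C P now S c')) ->
  (forall S, I S -> Q (step C P now S c)) ->
  in_block c bl -> I S -> Q (foldl (step C P now) S bl).
Proof.
move=> HI HQ Hc; elim: bl S => [|c' bl IH] S //= [->|Hin] IS.
  by apply: foldl_step_inv => //; apply: Hc.
by apply: IH => //; apply: HI.
Qed.

Lemma state_at_inv (Q : tsc -> Prop) g blocks t1 t2 :
  (forall now S c, Q S -> Q (step C P now S c)) ->
  t1 <= t2 -> Q (state_at C P g blocks t1) -> Q (state_at C P g blocks t2).
Proof.
move=> HQ /subnK <-; elim: (t2 - t1) => [//|d IH] Q1.
rewrite addSn /=; exact: foldl_step_inv (HQ _) (IH Q1).
Qed.

Lemma step_frozen now S c : st_frozen S -> st_frozen (step C P now S c).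
Proof. by case: c => [d txs q|y|y q||a s b p] /=; case: ifP. Qed.

Lemma step_executed x now S c :
  x \in st_executed S -> x \in st_executed (step C P now S c).
Proof.
move=> Hx; case: c => [d txs q|y|y q||a s b p] /=; case: ifP => //= _.
  by rewrite mem_cat Hx orbT.
by rewrite inE Hx orbT.
Qed.

Lemma step_frozen_or_executed x now S c :
  st_frozen S || (x \in st_executed S) ->
  st_frozen (step C P now S c) || (x \in st_executed (step C P now S c)).
Proof.
case/orP => [Hf|Hx]; first by rewrite step_frozen.
by rewrite step_executed ?orbT.
Qed.

Definition challenge_tracked (x : tx) (tc : nat) (S : tsc) : bool :=
  [|| st_frozen S, x \in st_executed S | (x, tc, false) \in st_challenges S].

Lemma step_challenge_tracked x tc now S c :
  challenge_tracked x tc S -> challenge_tracked x tc (step C P now S c).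
Proof.
case/or3P => [Hf|Hx|Hc].
- by rewrite /challenge_tracked step_frozen.
- by rewrite /challenge_tracked step_executed ?orbT.
rewrite /challenge_tracked.
case: c => [d txs q|y|y q||a s b p] /=; case: ifP => _ /=; rewrite ?inE ?Hc ?orbT //.
have [->|ne] := eqVneq x y; first by rewrite orbT.
apply/or3P/Or33/mapP; exists (x, tc, false) => //=.
by rewrite (negbTE ne).
Qed.

Lemma start_challenge_tracked x now S :
  challenge_tracked x now (step C P now S (StartChallenge x)).
Proof.
rewrite /challenge_tracked /=; case: ifP => /= [_|/negbFE -> //].
by rewrite inE eqxx !orbT.
Qed.

(* An unresolved entry at least tau old is exactly what SettleRollup needs. *)
Lemma settle_rollup_frozen x tc now S :
  tc + tau P <= now -> challenge_tracked x tc S ->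
  st_frozen (step C P now S SettleRollup) || (x \in st_executed S).
Proof.
move=> Hnow /or3P [Hf|Hx|Hc] /=.
- by case: ifP; rewrite /= Hf.
- by case: ifP; rewrite /= ?Hx ?orbT.
case: ifP => //= /negbT /nandP [/negPn -> //|/hasPn/(_ _ Hc)].
by rewrite /= Hnow.
Qed.

Lemma frozen_redeemable (da : digest -> mtree) (S : tsc) :
  sig_correct C -> st_frozen S ->
  mroot C (da (st_latest S)) = d_root (st_latest S) -> redeemable C P da S.
Proof.
move=> Hsig Hf Hda sk b /(mverify_leaf C) [p Hp]; exists p => now /=.
by rewrite Hf Hsig -Hda Hp.
Qed.

Section Run.
Variables (g : digest) (blocks : nat -> seq call) (x : tx) (tc : nat).
Local Notation state := (state_at C P g blocks).

Lemma state_frozen t1 t2 : t1 <= t2 -> st_frozen (state t1) -> st_frozen (state t2).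
Proof. exact: state_at_inv (@step_frozen). Qed.

Lemma challenge_tracked_after_start :
  (~~ st_frozen (state tc) -> x \notin st_executed (state tc) ->
   in_block (StartChallenge x) (blocks tc)) ->
  challenge_tracked x tc (state tc.+1).
Proof.
move=> Hch.
have [Hdone|] := boolP (st_frozen (state tc) || (x \in st_executed (state tc))).
  apply: (state_at_inv (@step_challenge_tracked x tc) (leqnSn tc)).
  by rewrite /challenge_tracked orbA Hdone.
rewrite negb_or => /andP [Hnf Hnx].
apply: (foldl_step_in (I := fun _ => True) (Q := challenge_tracked x tc)) (Hch Hnf Hnx) _ => //.
- exact: step_challenge_tracked.
- by move=> S _; apply: start_challenge_tracked.
Qed.

Lemma challenge_outcome :
  0 < tau P ->
  (~~ st_frozen (state tc) -> x \notin st_executed (state tc) ->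
   in_block (StartChallenge x) (blocks tc)) ->
  (~~ st_frozen (state (tc + tau P)) -> x \notin st_executed (state (tc + tau P)) ->
   in_block SettleRollup (blocks (tc + tau P))) ->
  st_frozen (state (tc + tau P).+1) || (x \in st_executed (state (tc + tau P).+1)).
Proof.
move=> Htau Hch Hset.
have [Hdone|] := boolP (st_frozen (state (tc + tau P)) || (x \in st_executed (state (tc + tau P)))).
  exact: (state_at_inv (@step_frozen_or_executed x) (leqnSn _) Hdone).
rewrite negb_or => /andP [Hnf Hnx].
apply: (foldl_step_in (I := challenge_tracked x tc)
          (Q := fun S => st_frozen S || (x \in st_executed S))) (Hset Hnf Hnx) _.
- exact: step_challenge_tracked.
- exact: step_frozen_or_executed.
- move=> S /(settle_rollup_frozen (leqnn _))/orP [-> //|Hx].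
  by rewrite step_executed ?orbT.
apply: (state_at_inv (@step_challenge_tracked x tc) _ (challenge_tracked_after_start Hch)).
by rewrite -addn1 leq_add2l.
Qed.

End Run.
End TSC.

Theorem theorem2 (C : crypto) (P : params) (g : digest) (da : digest -> mtree)
    (blocks : nat -> seq call) (x : tx) (tc : nat) :
  sig_correct C ->
  size (reg P) = n P -> uniq (reg P) -> 0 < tau P ->
  (* data availability: the stored account tree matches the recorded root *)
  (forall t, mroot C (da (st_latest (state_at C P g blocks t)))
             = d_root (st_latest (state_at C P g blocks t))) ->
  (* the client challenges x at time tc if it is not executed yet *)
  (~~ st_frozen (state_at C P g blocks tc) ->
   x \notin st_executed (state_at C P g blocks tc) ->
   in_block (StartChallenge x) (blocks tc)) ->
  (* after the waiting time, SettleRollup is called if x is still not executed *)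
  (~~ st_frozen (state_at C P g blocks (tc + tau P)) ->
   x \notin st_executed (state_at C P g blocks (tc + tau P)) ->
   in_block SettleRollup (blocks (tc + tau P))) ->
  (exists t, x \in st_executed (state_at C P g blocks t)) \/
  (exists t, forall t', t <= t' ->
     st_frozen (state_at C P g blocks t') /\ redeemable C P da (state_at C P g blocks t')).
Proof.
move=> Hsig _ _ Htau Hda Hch Hset.
case/orP: (challenge_outcome Htau Hch Hset) => [Hf|Hx]; last by left; exists (tc + tau P).+1.
right; exists (tc + tau P).+1 => t' le.
have Hfrozen := state_frozen le Hf.
by split; last exact: frozen_redeemable.
Qed.
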